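(* Let $X_0^*$ be a $\{1,2,\dots\}$-valued random variable with $\mathbf P(X_0^*\ge2)>0$ and $\mathbf E(X_0^*m^{X_0^*})<\infty$, let $p>p_c$, let $X_0$ have law $(1-p)\delta_0+pP_{X_0^*}$, and let $n\ge0$. Then: (i) $\Theta_n(s)\in[0,1+\delta_n]$ for all $s\in[0,m)$; (ii) if $\delta_n\le1$, then for all $s\in[\frac m2,m)$, $$\Theta_{n+1}(s)\ge\frac ms\,\Theta_n(s)\,H_n(s)^{m-1}-\frac{\kappa(m-s)}{s}\,[\delta_n-\varphi_n(s)]^2H_n(s)^{m-2},$$ where $\kappa:=3^{m-2}+1$.
   Context: Fix an integer $m\ge2$. Recursive system: $X_{n+1}$ has the law of $(X_{n,1}+\cdots+X_{n,m}-1)^+$, with $X_{n,i}$ independent copies of $X_n$. $p_c:=\frac{1}{1+\mathbf E\{[(m-1)X_0^*-1]m^{X_0^*}\}}$. $H_n(s):=\mathbf E(s^{X_n})$; $\delta_n:=(m-1)\mathbf E(X_nm^{X_n})-\mathbf E(m^{X_n})$; $\varphi_n(s):=(m-1)sH_n'(s)-H_n(s)$; and $$\Theta_n(s):=[H_n(s)-s(s-1)H_n'(s)]-\frac{(m-1)(m-s)}{m}[2sH_n'(s)+s^2H_n''(s)]+\delta_n .$$ *)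

From Stdlib Require Import Reals Lra ClassicalEpsilon.
Open Scope R_scope.

(* A law on {0,1,2,...} is represented by its mass function q : nat -> R. *)

Definition conv (a b : nat -> R) (k : nat) : R :=
  sum_f_R0 (fun i => a i * b (k - i)%nat) k.

Definition delta0 (k : nat) : R := match k with O => 1 | _ => 0 end.

Fixpoint convpow (j : nat) (a : nat -> R) : nat -> R :=
  match j with O => delta0 | S j' => conv a (convpow j' a) end.

(* Law of (X_1 + ... + X_m - 1)^+ with X_i iid of law q. *)
Definition step (m : nat) (q : nat -> R) : nat -> R :=
  fun k => match k with
           | O => convpow m q 0%nat + convpow m q 1%nat
           | S k' => convpow m q (S (S k'))
           end.

Fixpoint law (m : nat) (q0 : nat -> R) (n : nat) : nat -> R :=
  match n with O => q0 | S n' => step m (law m q0 n') end.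

Definition Rsum (a : nat -> R) : R := epsilon (inhabits 0) (fun l => infinite_sum a l).

Definition expect (q : nat -> R) (f : nat -> R) : R := Rsum (fun k => q k * f k).

(* Generating function H(s) = E s^X and its first two derivatives
   (termwise: H'(s) = E[X s^(X-1)], H''(s) = E[X(X-1) s^(X-2)]). *)
Definition Hgf (q : nat -> R) (s : R) : R := expect q (fun k => s ^ k).
Definition Hgf1 (q : nat -> R) (s : R) : R := expect q (fun k => INR k * s ^ (k - 1)).
Definition Hgf2 (q : nat -> R) (s : R) : R :=
  expect q (fun k => INR k * INR (k - 1) * s ^ (k - 2)).

Definition deltaq (m : nat) (q : nat -> R) : R :=
  (INR m - 1) * expect q (fun k => INR k * INR m ^ k) - expect q (fun k => INR m ^ k).

Definition phiq (m : nat) (q : nat -> R) (s : R) : R :=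
  (INR m - 1) * s * Hgf1 q s - Hgf q s.

Definition Thetaq (m : nat) (q : nat -> R) (s : R) : R :=
  (Hgf q s - s * (s - 1) * Hgf1 q s)
  - (INR m - 1) * (INR m - s) / INR m * (2 * s * Hgf1 q s + s ^ 2 * Hgf2 q s)
  + deltaq m q.

Definition pc (m : nat) (r : nat -> R) : R :=
  1 / (1 + expect r (fun k => ((INR m - 1) * INR k - 1) * INR m ^ k)).

Definition X0law (p : R) (r : nat -> R) : nat -> R :=
  fun k => (1 - p) * delta0 k + p * r k.

From Stdlib Require Import Reals Lra Lia ClassicalEpsilon.
From Coquelicot Require Import Coquelicot.
Open Scope R_scope.

(** Everything is expressed through the weighted moment series
    sum_k q_k k^j s^k (j = 0, 1, 2) of a law q.  Writing h = H(s), f1 = s H'(s),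
    f2 = E X^2 s^X, the quantities of the statement are Theta = theta_moments(h, f1,
    f2, delta) and phi = (m-1) f1 - h.  Regular laws (E m^X and E X m^X finite) are stable under the
    recursion, with delta_(n+1) = (E m^(X_n))^(m-1) delta_n, so delta_n >= 0 for
    all n once delta_0 > 0, which is exactly p > p_c.
    Part (i): Theta is linear in the law and Theta(Dirac_k) is a nonnegative
    multiple of the convexity gap of x |-> x^(k+1), bounded by the k-th term of
    1 + delta.  Part (ii): an exact identity expresses s Theta_(n+1) - m Theta_n
    h^(m-1) as delta (s A^(m-1) - m h^(m-1)) - (m - s) h^(m-2) phi^2 (A = E m^X);
    convexity bounds the first bracket below by (m - s) h^(m-2) phi, and phi <=
    delta closes the estimate for every constant kappa >= 1. *)

Lemma is_series_congr (a b : nat -> R) (la lb : R) :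
  (forall n, a n = b n) -> la = lb -> is_series a la -> is_series b lb.
Proof. intros Hab <-. apply (is_series_ext a b la Hab). Qed.

Lemma is_series_scale (c : R) (a : nat -> R) (l : R) :
  is_series a l -> is_series (fun n => c * a n) (c * l).
Proof. exact (@is_series_scal_l R_AbsRing R_NormedModule c a l). Qed.

Lemma is_series_lin (x y : R) (a b : nat -> R) (la lb : R) :
  is_series a la -> is_series b lb ->
  is_series (fun n => x * a n + y * b n) (x * la + y * lb).
Proof.
  intros Ha Hb.
  exact (is_series_plus _ _ _ _ (is_series_scale x a la Ha) (is_series_scale y b lb Hb)).
Qed.

Lemma is_series_zero : is_series (fun _ => 0) 0.
Proof.
  assert (Hg : is_series (fun n => (1/2) ^ n) (/ (1 - 1/2)))
    by (apply is_series_geom; rewrite Rabs_right; lra).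
  apply (is_series_congr _ _ _ _ (fun n => Rmult_0_l _) (Rmult_0_l _) (is_series_scale 0 _ _ Hg)).
Qed.

Lemma is_series_head (u : nat -> R) : (forall k, u (S k) = 0) -> is_series u (u O).
Proof.
  intros Hu. apply is_series_decr_1.
  apply (is_series_congr (fun _ => 0) _ 0); [intro n; now rewrite Hu | | exact is_series_zero].
  unfold plus, opp; simpl; ring.
Qed.

Lemma is_series_tail (u : nat -> R) (l : R) :
  is_series u l -> is_series (fun k => u (S k)) (l - u O).
Proof.
  intros H. apply is_series_incr_1. apply (is_series_congr u u l); auto.
  unfold plus; simpl; ring.
Qed.

Lemma is_series_ge0 (a : nat -> R) (l : R) : (forall n, 0 <= a n) -> is_series a l -> 0 <= l.
Proof.
  intros Ha H. rewrite <- (is_series_unique a l H).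
  apply (Rle_trans _ (Series (fun _ => 0))).
  - rewrite (is_series_unique _ 0 is_series_zero). lra.
  - apply Series_le; [intro n; split; [lra | auto] | eexists; eauto].
Qed.

Lemma is_series_le (a b : nat -> R) (la lb : R) :
  (forall n, a n <= b n) -> is_series a la -> is_series b lb -> la <= lb.
Proof.
  intros Hab Ha Hb.
  enough (0 <= 1 * lb + -1 * la) by lra.
  apply (is_series_ge0 (fun n => 1 * b n + -1 * a n)); [intro n; specialize (Hab n); lra|].
  now apply is_series_lin.
Qed.

Lemma ex_series_dominated (a b : nat -> R) :
  (forall n, 0 <= a n <= b n) -> ex_series b -> ex_series a.
Proof.
  intros H Hb. apply (ex_series_le a b); auto.
  intro n. change (norm (a n)) with (Rabs (a n)). rewrite Rabs_pos_eq; apply H.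
Qed.

Lemma Rsum_eq (a : nat -> R) (l : R) : is_series a l -> Rsum a = l.
Proof.
  intros H. unfold Rsum. apply is_series_Reals in H.
  pose proof (epsilon_spec (inhabits 0) (fun l => infinite_sum a l) (ex_intro _ l H)) as Hs.
  eapply uniqueness_sum; eauto.
Qed.

(** Weighted moments.  [moment_term j q s k = q k * k^j * s^k]; the series
    [sum_k moment_term j q s k] is E[X^j s^X] for X of law q. *)
Definition moment_term (j : nat) (q : nat -> R) (s : R) (k : nat) : R :=
  q k * (INR k ^ j * s ^ k).

Lemma moment_term_ge0 j q s :
  (forall k, 0 <= q k) -> 0 <= s -> forall k, 0 <= moment_term j q s k.
Proof.
  intros Hq Hs k. unfold moment_term.
  apply Rmult_le_pos; auto. apply Rmult_le_pos; apply pow_le; [apply pos_INR | lra].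
Qed.

Lemma conv_ge0 (a b : nat -> R) :
  (forall k, 0 <= a k) -> (forall k, 0 <= b k) -> forall k, 0 <= conv a b k.
Proof. intros Ha Hb k. apply cond_pos_sum. intro; apply Rmult_le_pos; auto. Qed.

Lemma convpow_ge0 (q : nat -> R) :
  (forall k, 0 <= q k) -> forall j k, 0 <= convpow j q k.
Proof.
  intros Hq j. induction j as [|j IH]; intro k.
  - destruct k; simpl; lra.
  - now apply conv_ge0.
Qed.

Section ConvMoments.
Variables (a b : nat -> R) (s : R).
Hypotheses (Ha : forall k, 0 <= a k) (Hb : forall k, 0 <= b k) (Hs : 0 <= s).

Lemma conv_moment_term j n :
  moment_term j (conv a b) s n =
  sum_f_R0 (fun i => a i * b (n - i)%nat * ((INR i + INR (n - i)) ^ j * (s ^ i * s ^ (n - i)))) n.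
Proof.
  unfold moment_term, conv. rewrite Rmult_comm, scal_sum. apply sum_eq. intros i Hi.
  rewrite <- pow_add, <- plus_INR, Nat.add_sub_assoc, Nat.add_comm, Nat.add_sub by lia. ring.
Qed.

Lemma moment_product (i j : nat) (A B : R) :
  is_series (moment_term i a s) A -> is_series (moment_term j b s) B ->
  is_series (fun n => sum_f_R0 (fun k => moment_term i a s k * moment_term j b s (n - k)) n)
            (A * B).
Proof. intros HA HB. apply is_series_mult_pos; auto; apply moment_term_ge0; auto. Qed.

Lemma conv_moment0 (A0 B0 : R) :
  is_series (moment_term 0 a s) A0 -> is_series (moment_term 0 b s) B0 ->
  is_series (moment_term 0 (conv a b) s) (A0 * B0).
Proof.
  intros HA HB. eapply is_series_congr; [| reflexivity | exact (moment_product 0 0 _ _ HA HB)].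
  intro n. rewrite conv_moment_term. apply sum_eq; intros; unfold moment_term; ring.
Qed.

Lemma conv_moment1 (A0 B0 A1 B1 : R) :
  is_series (moment_term 0 a s) A0 -> is_series (moment_term 0 b s) B0 ->
  is_series (moment_term 1 a s) A1 -> is_series (moment_term 1 b s) B1 ->
  is_series (moment_term 1 (conv a b) s) (A1 * B0 + A0 * B1).
Proof.
  intros HA0 HB0 HA1 HB1.
  eapply is_series_congr; [| | exact (is_series_lin 1 1 _ _ _ _
      (moment_product 1 0 _ _ HA1 HB0) (moment_product 0 1 _ _ HA0 HB1))]; [| ring].
  intro n. rewrite conv_moment_term, !scal_sum, <- plus_sum.
  apply sum_eq; intros; unfold moment_term; ring.
Qed.

Lemma conv_moment2 (A0 B0 A1 B1 A2 B2 : R) :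
  is_series (moment_term 0 a s) A0 -> is_series (moment_term 0 b s) B0 ->
  is_series (moment_term 1 a s) A1 -> is_series (moment_term 1 b s) B1 ->
  is_series (moment_term 2 a s) A2 -> is_series (moment_term 2 b s) B2 ->
  is_series (moment_term 2 (conv a b) s) (A2 * B0 + 2 * (A1 * B1) + A0 * B2).
Proof.
  intros HA0 HB0 HA1 HB1 HA2 HB2.
  eapply is_series_congr; [| | exact (is_series_lin 1 1 _ _ _ _
      (is_series_lin 1 2 _ _ _ _ (moment_product 2 0 _ _ HA2 HB0) (moment_product 1 1 _ _ HA1 HB1))
      (moment_product 0 2 _ _ HA0 HB2))]; [| ring].
  intro n. rewrite conv_moment_term, !scal_sum, <- !plus_sum, scal_sum, <- plus_sum.
  apply sum_eq; intros; unfold moment_term; ring.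
Qed.
End ConvMoments.

Lemma delta0_moment j s : is_series (moment_term j delta0 s) (INR 0 ^ j).
Proof.
  eapply is_series_congr;
    [reflexivity | | apply is_series_head; intro; unfold moment_term; simpl; ring].
  unfold moment_term; simpl; ring.
Qed.

Section ConvPowMoments.
Variables (q : nat -> R) (s h f1 : R).
Hypotheses (Hq : forall k, 0 <= q k) (Hs : 0 <= s)
  (H0 : is_series (moment_term 0 q s) h) (H1 : is_series (moment_term 1 q s) f1).

Lemma convpow_moment01 j :
  is_series (moment_term 0 (convpow j q) s) (h ^ j) /\
  is_series (moment_term 1 (convpow j q) s) (INR j * h ^ (j - 1) * f1).
Proof.
  induction j as [|j [IH0 IH1]].
  - split; eapply is_series_congr; try apply delta0_moment; try reflexivity; simpl; ring.
  - pose proof (convpow_ge0 q Hq j) as Hj. split; simpl convpow.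
    + now apply conv_moment0.
    + eapply is_series_congr; [reflexivity | | apply conv_moment1; eauto].
      destruct j as [|j]; simpl; rewrite ?Nat.sub_0_r, ?S_INR; simpl; ring.
Qed.

Lemma convpow_moment2 (f2 : R) : is_series (moment_term 2 q s) f2 -> forall j,
  is_series (moment_term 2 (convpow j q) s)
    (INR j * h ^ (j - 1) * f2 + INR j * (INR j - 1) * h ^ (j - 2) * f1 ^ 2).
Proof.
  intros H2 j. induction j as [|j IH].
  - eapply is_series_congr; [reflexivity | | apply delta0_moment]. simpl; ring.
  - destruct (convpow_moment01 j) as [IH0 IH1].
    eapply is_series_congr; [reflexivity | | apply conv_moment2; eauto using convpow_ge0].
    destruct j as [|[|j]]; simpl; rewrite ?Nat.sub_0_r, ?S_INR; simpl; ring.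
Qed.
End ConvPowMoments.

Section StepMoments.
Variables (m : nat) (q : nat -> R) (s K0 K1 K2 : R).
Let P := convpow m q.
Hypotheses (Hs : 0 < s) (H0 : is_series (moment_term 0 P s) K0)
  (H1 : is_series (moment_term 1 P s) K1) (H2 : is_series (moment_term 2 P s) K2).

Lemma step_moment0 : is_series (moment_term 0 (step m q) s) ((K0 - P O + s * P O) / s).
Proof.
  pose proof (is_series_lin (/ s) (/ s) _ _ _ _ (is_series_tail _ _ H0)
     (is_series_head (fun k => match k with O => s * P O | _ => 0 end) (fun _ => eq_refl))) as E.
  eapply is_series_congr; [| | exact E].
  - intro k; unfold moment_term, step; destruct k; fold P; simpl; field; lra.
  - unfold moment_term; simpl; field; lra.
Qed.

Lemma step_moment1 : is_series (moment_term 1 (step m q) s) ((K1 - K0 + P O) / s).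
Proof.
  pose proof (is_series_lin (/ s) (- / s) _ _ _ _ (is_series_tail _ _ H1) (is_series_tail _ _ H0))
    as E.
  eapply is_series_congr; [| | exact E].
  - intro k; unfold moment_term, step; destruct k; fold P; simpl; rewrite ?S_INR; simpl; field; lra.
  - unfold moment_term; simpl; field; lra.
Qed.

Lemma step_moment2 : is_series (moment_term 2 (step m q) s) ((K2 - 2 * K1 + K0 - P O) / s).
Proof.
  pose proof (is_series_lin (/ s) (/ s) _ _ _ _
    (is_series_lin 1 (-2) _ _ _ _ (is_series_tail _ _ H2) (is_series_tail _ _ H1))
    (is_series_tail _ _ H0)) as E.
  eapply is_series_congr; [| | exact E].
  - intro k; unfold moment_term, step; destruct k; fold P; simpl; rewrite ?S_INR; simpl; field; lra.
  - unfold moment_term; simpl; field; lra.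
Qed.
End StepMoments.

Lemma Hgf_moment q s (h : R) : is_series (moment_term 0 q s) h -> Hgf q s = h.
Proof.
  intros H. apply Rsum_eq. eapply is_series_congr; [| reflexivity | exact H].
  intro k; unfold moment_term; ring.
Qed.

Lemma Hgf1_moment q s (f1 : R) : 0 < s -> is_series (moment_term 1 q s) f1 -> Hgf1 q s = f1 / s.
Proof.
  intros Hs H. apply Rsum_eq.
  eapply is_series_congr; [| | exact (is_series_scale (/ s) _ _ H)].
  - intro k; unfold moment_term.
    destruct k; cbn [Nat.sub pow]; rewrite ?Nat.sub_0_r, ?S_INR; simpl INR; field; lra.
  - field; lra.
Qed.

Lemma Hgf2_moment q s (f1 f2 : R) : 0 < s ->
  is_series (moment_term 1 q s) f1 -> is_series (moment_term 2 q s) f2 ->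
  Hgf2 q s = (f2 - f1) / (s * s).
Proof.
  intros Hs H1 H2. apply Rsum_eq.
  eapply is_series_congr; [| | exact (is_series_lin (/ (s * s)) (- / (s * s)) _ _ _ _ H2 H1)].
  - intro k; unfold moment_term.
    destruct k as [|[|k]]; cbn [Nat.sub pow]; rewrite ?Nat.sub_0_r, ?S_INR; simpl INR; field; lra.
  - field; lra.
Qed.

Lemma deltaq_moment m q (A B : R) :
  is_series (moment_term 0 q (INR m)) A -> is_series (moment_term 1 q (INR m)) B ->
  deltaq m q = (INR m - 1) * B - A.
Proof.
  intros HA HB. unfold deltaq, expect.
  rewrite (Rsum_eq _ B), (Rsum_eq _ A); [reflexivity | |];
    eapply is_series_congr; eauto; intro k; unfold moment_term; ring.
Qed.

Lemma tangent_bound (M s : R) (k : nat) :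
  0 <= s <= M -> INR (S k) * s ^ k * (M - s) <= M ^ S k - s ^ S k.
Proof.
  intros Hs. induction k as [|k IH]; [simpl; lra|].
  rewrite (S_INR (S k)). simpl pow in *.
  assert (0 <= INR (S k)) by apply pos_INR.
  assert (0 <= s ^ k) by (apply pow_le; lra).
  assert (s ^ k <= M ^ k) by (apply pow_incr; lra).
  assert (s * (INR (S k) * s ^ k * (M - s)) <= s * (M * M ^ k - s * s ^ k))
    by (apply Rmult_le_compat_l; lra).
  assert (0 <= (M - s) * (M * M ^ k - s * s ^ k)) by (apply Rmult_le_pos; nra).
  nra.
Qed.

Lemma tangent_bound_pred (M s : R) (k : nat) :
  0 <= s <= M -> INR k * s ^ (k - 1) * (M - s) <= M ^ k - s ^ k.
Proof.
  intros Hs. destruct k as [|k]; [simpl; lra|].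
  replace (S k - 1)%nat with k by lia. now apply tangent_bound.
Qed.

(* k s^k (M - s) <= s M^k: the weights k s^k are summable against M^k when s < M. *)
Lemma weight_moment_bound (M s : R) (k : nat) :
  0 <= s <= M -> INR k * s ^ k * (M - s) <= s * M ^ k.
Proof.
  intros Hs. destruct k as [|k]; [simpl; lra|].
  pose proof (tangent_bound M s k Hs) as B. rewrite S_INR in *. simpl pow in *.
  assert (0 <= s ^ k) by (apply pow_le; lra).
  assert (s * (INR k * s ^ k * (M - s) + s ^ k * (M - s)) <= s * (M * M ^ k - s * s ^ k))
    by (apply Rmult_le_compat_l; lra).
  assert (0 <= s * (s ^ k * (M - s))) by (apply Rmult_le_pos; [| apply Rmult_le_pos]; lra).
  nra.
Qed.

Lemma weight_deriv1_bound (M s : R) (k : nat) :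
  1 <= M -> 0 <= s <= M -> INR k * s ^ (k - 1) <= INR k * M ^ k.
Proof.
  intros HM Hs. apply Rmult_le_compat_l; [apply pos_INR|].
  destruct k as [|k]; simpl; [lra|]. rewrite Nat.sub_0_r.
  assert (s ^ k <= M ^ k) by (apply pow_incr; lra).
  assert (0 <= M ^ k) by (apply pow_le; lra). nra.
Qed.

Lemma weight_deriv2_bound (M s : R) (k : nat) :
  1 <= M -> 0 <= s <= M -> INR k * INR (k - 1) * s ^ (k - 2) * (M - s) <= INR k * M ^ k.
Proof.
  intros HM Hs. pose proof (tangent_bound_pred M s (k - 1) Hs) as B.
  assert (0 <= INR k) by apply pos_INR.
  assert (0 <= s ^ (k - 1)) by (apply pow_le; lra).
  assert (M ^ (k - 1) <= M ^ k).
  { destruct k as [|k]; simpl; [lra|]. rewrite Nat.sub_0_r.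
    assert (0 <= M ^ k) by (apply pow_le; lra). nra. }
  replace (k - 2)%nat with (k - 1 - 1)%nat by lia.
  rewrite !Rmult_assoc. apply Rmult_le_compat_l; auto.
  rewrite <- Rmult_assoc. lra.
Qed.

Section StepLaw.
Variables (m : nat) (q : nat -> R) (s h f1 : R).
Hypotheses (Hq : forall k, 0 <= q k) (Hs : 0 < s)
  (H0 : is_series (moment_term 0 q s) h) (H1 : is_series (moment_term 1 q s) f1).

Lemma step_law_moment0 :
  is_series (moment_term 0 (step m q) s) ((h ^ m - convpow m q O + s * convpow m q O) / s).
Proof.
  destruct (convpow_moment01 q s h f1 Hq ltac:(lra) H0 H1 m) as [P0 _].
  apply step_moment0; auto.
Qed.

Lemma step_law_moment1 :
  is_series (moment_term 1 (step m q) s)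
    ((INR m * h ^ (m - 1) * f1 - h ^ m + convpow m q O) / s).
Proof.
  destruct (convpow_moment01 q s h f1 Hq ltac:(lra) H0 H1 m) as [P0 P1].
  eapply step_moment1; eauto.
Qed.

Lemma step_law_moment2 (f2 : R) : is_series (moment_term 2 q s) f2 ->
  is_series (moment_term 2 (step m q) s)
    (((INR m * h ^ (m - 1) * f2 + INR m * (INR m - 1) * h ^ (m - 2) * f1 ^ 2)
      - 2 * (INR m * h ^ (m - 1) * f1) + h ^ m - convpow m q O) / s).
Proof.
  intros H2.
  destruct (convpow_moment01 q s h f1 Hq ltac:(lra) H0 H1 m) as [P0 P1].
  pose proof (convpow_moment2 q s h f1 Hq ltac:(lra) H0 H1 f2 H2 m) as P2.
  eapply step_moment2; eauto.
Qed.
End StepLaw.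

Definition regular_law (M : R) (q : nat -> R) : Prop :=
  (forall k, 0 <= q k) /\ is_series q 1 /\
  ex_series (moment_term 0 q M) /\ ex_series (moment_term 1 q M).

Lemma moment_term_mono j q s M :
  (forall k, 0 <= q k) -> 0 <= s <= M -> forall k, moment_term j q s k <= moment_term j q M k.
Proof.
  intros Hq Hs k. unfold moment_term. apply Rmult_le_compat_l; auto.
  apply Rmult_le_compat_l; [apply pow_le, pos_INR | apply pow_incr; lra].
Qed.

Section Regular.
Variables (M : R) (q : nat -> R).
Hypotheses (HM : 1 <= M) (Hreg : regular_law M q).

Lemma regular_moment0 s : 0 <= s <= M -> ex_series (moment_term 0 q s).
Proof.
  intros Hs. destruct Hreg as (Hq & _ & H0 & _). apply (ex_series_dominated _ _ (fun k =>
    conj (moment_term_ge0 0 q s Hq ltac:(lra) k) (moment_term_mono 0 q s M Hq Hs k)) H0).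
Qed.

Lemma regular_moment1 s : 0 <= s <= M -> ex_series (moment_term 1 q s).
Proof.
  intros Hs. destruct Hreg as (Hq & _ & _ & H1). apply (ex_series_dominated _ _ (fun k =>
    conj (moment_term_ge0 1 q s Hq ltac:(lra) k) (moment_term_mono 1 q s M Hq Hs k)) H1).
Qed.

Lemma regular_moment2 s : 0 <= s < M -> ex_series (moment_term 2 q s).
Proof.
  intros Hs. destruct Hreg as (Hq & _ & _ & H1).
  apply (ex_series_dominated _ (fun k => (s / (M - s)) * moment_term 1 q M k));
    [| now apply (@ex_series_scal_l R_AbsRing R_NormedModule)].
  intro k. split; [apply moment_term_ge0; auto; lra|]. unfold moment_term.
  pose proof (weight_moment_bound M s k ltac:(lra)) as B.
  assert (0 <= q k * INR k) by (apply Rmult_le_pos; auto; apply pos_INR).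
  assert (B' : INR k * s ^ k <= s / (M - s) * M ^ k).
  { apply Rmult_le_reg_r with (M - s); [lra|].
    replace (s / (M - s) * M ^ k * (M - s)) with (s * M ^ k) by (field; lra). lra. }
  apply Rmult_le_compat_l with (r := q k * INR k) in B'; auto.
  replace (q k * (INR k ^ 2 * s ^ k)) with (q k * INR k * (INR k * s ^ k)) by ring.
  replace (s / (M - s) * (q k * (INR k ^ 1 * M ^ k))) with (q k * INR k * (s / (M - s) * M ^ k))
    by ring.
  exact B'.
Qed.

Lemma regular_deriv1 s : 0 <= s <= M -> ex_series (fun k => q k * (INR k * s ^ (k - 1))).
Proof.
  intros Hs. destruct Hreg as (Hq & _ & _ & H1).
  apply (ex_series_dominated _ (moment_term 1 q M)); [| exact H1].
  intro k. split.
  - apply Rmult_le_pos; auto; apply Rmult_le_pos; [apply pos_INR | apply pow_le; lra].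
  - unfold moment_term. rewrite pow_1. apply Rmult_le_compat_l; auto. now apply weight_deriv1_bound.
Qed.

Lemma regular_deriv2 s : 0 <= s < M ->
  ex_series (fun k => q k * (INR k * INR (k - 1) * s ^ (k - 2))).
Proof.
  intros Hs. destruct Hreg as (Hq & _ & _ & H1).
  apply (ex_series_dominated _ (fun k => / (M - s) * moment_term 1 q M k));
    [| now apply (@ex_series_scal_l R_AbsRing R_NormedModule)].
  intro k. split.
  - apply Rmult_le_pos; auto.
    apply Rmult_le_pos; [apply Rmult_le_pos; apply pos_INR | apply pow_le; lra].
  - unfold moment_term. rewrite pow_1.
    pose proof (weight_deriv2_bound M s k ltac:(lra) ltac:(lra)) as B.
    assert (B' : INR k * INR (k - 1) * s ^ (k - 2) <= / (M - s) * (INR k * M ^ k)).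
    { apply Rmult_le_reg_r with (M - s); [lra|].
      replace (/ (M - s) * (INR k * M ^ k) * (M - s)) with (INR k * M ^ k) by (field; lra). lra. }
    apply Rmult_le_compat_l with (r := q k) in B'; auto. lra.
Qed.
End Regular.

Section StepRegular.
Variables (m : nat) (q : nat -> R).
Let M := INR m.
Hypotheses (HM : 1 <= M) (Hreg : regular_law M q).

Lemma step_regular : regular_law M (step m q).
Proof.
  pose proof Hreg as (Hq & Hsum & _ & _).
  assert (Hs0 : forall s, 0 < s <= M -> is_series (moment_term 0 q s) (Series (moment_term 0 q s)))
    by (intros s Hs; apply Series_correct, (regular_moment0 M); auto; lra).
  assert (Hs1 : forall s, 0 < s <= M -> is_series (moment_term 1 q s) (Series (moment_term 1 q s)))
    by (intros s Hs; apply Series_correct, (regular_moment1 M); auto; lra).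
  split; [|split; [|split]].
  - intro k. destruct k; simpl; [apply Rplus_le_le_0_compat|]; apply convpow_ge0; auto.
  - assert (Hq1 : is_series (moment_term 0 q 1) 1).
    { eapply is_series_congr; [| reflexivity | exact Hsum].
      intro; unfold moment_term; rewrite pow1; ring. }
    eapply is_series_congr;
      [| | exact (step_law_moment0 m q 1 1 _ Hq Rlt_0_1 Hq1 (Hs1 1 ltac:(lra)))].
    + intro; unfold moment_term; rewrite pow1; ring.
    + rewrite pow1; field.
  - eexists. apply (step_law_moment0 m q M _ _ Hq ltac:(lra) (Hs0 M ltac:(lra)) (Hs1 M ltac:(lra))).
  - eexists. apply (step_law_moment1 m q M _ _ Hq ltac:(lra) (Hs0 M ltac:(lra)) (Hs1 M ltac:(lra))).
Qed.

Lemma step_delta (A B : R) :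
  is_series (moment_term 0 q M) A -> is_series (moment_term 1 q M) B ->
  deltaq m (step m q) = A ^ (m - 1) * deltaq m q.
Proof.
  intros HA HB. pose proof Hreg as (Hq & _ & _ & _).
  rewrite (deltaq_moment m q A B HA HB),
    (deltaq_moment m _ _ _ (step_law_moment0 m q M _ _ Hq ltac:(lra) HA HB)
                           (step_law_moment1 m q M _ _ Hq ltac:(lra) HA HB)).
  fold M. destruct m as [|k]; [unfold M in HM; simpl in HM; lra|].
  replace (S k - 1)%nat with k by lia. simpl pow. field. lra.
Qed.
End StepRegular.

Lemma law_regular (m : nat) (q0 : nat -> R) :
  1 <= INR m -> regular_law (INR m) q0 -> 0 <= deltaq m q0 ->
  forall n, regular_law (INR m) (law m q0 n) /\ 0 <= deltaq m (law m q0 n).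
Proof.
  intros HM Hreg0 Hd0 n. induction n as [|n [Hreg Hd]]; [auto|].
  pose proof Hreg as (Hq & _ & HA & HB).
  apply Series_correct in HA. apply Series_correct in HB.
  split; simpl law.
  - now apply step_regular.
  - rewrite (step_delta m _ HM Hreg _ _ HA HB). apply Rmult_le_pos; auto.
    apply pow_le, (is_series_ge0 _ _ (moment_term_ge0 0 _ (INR m) Hq ltac:(lra)) HA).
Qed.

(** Theta is linear in the law: Theta(s) = sum_k q_k theta_k(s), where
    theta_k(s) is the value of Theta for the Dirac mass at k. *)
Definition theta_atom (M s : R) (k : nat) : R :=
  s ^ k - s * (s - 1) * (INR k * s ^ (k - 1))
  - (M - 1) * (M - s) / M
    * (2 * s * (INR k * s ^ (k - 1)) + s ^ 2 * (INR k * INR (k - 1) * s ^ (k - 2)))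
  + ((M - 1) * (INR k * M ^ k) - M ^ k).

Lemma theta_atom_gap (M s : R) (k : nat) : M <> 0 ->
  theta_atom M s k =
  ((M - 1) * INR k - 1) * (M ^ S k - s ^ S k - INR (S k) * s ^ k * (M - s)) / M.
Proof.
  intros HM. unfold theta_atom.
  destruct k as [|[|k]]; cbn [Nat.sub pow]; rewrite ?Nat.sub_0_r, ?S_INR; simpl INR; field; auto.
Qed.

Lemma theta_atom_bounds (M s : R) (k : nat) : 2 <= M -> 0 <= s <= M ->
  0 <= theta_atom M s k <= 1 + ((M - 1) * INR k - 1) * M ^ k.
Proof.
  intros HM Hs. rewrite theta_atom_gap by lra.
  destruct k as [|k]; [simpl; split; [right|]; field_simplify; lra|].
  pose proof (tangent_bound M s (S k) Hs) as Hgap.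
  assert (Hc : 0 <= (M - 1) * INR (S k) - 1).
  { rewrite S_INR. assert (0 <= INR k) by apply pos_INR. nra. }
  assert (0 <= s ^ S (S k)) by (apply pow_le; lra).
  assert (0 <= INR (S (S k)) * s ^ S k * (M - s))
    by (apply Rmult_le_pos; [apply Rmult_le_pos; [apply pos_INR | apply pow_le] |]; lra).
  set (g := M ^ S (S k) - s ^ S (S k) - INR (S (S k)) * s ^ S k * (M - s)) in *.
  assert (Hg : 0 <= g <= M * M ^ S k)
    by (unfold g; change (M ^ S (S k)) with (M * M ^ S k) in *; lra).
  unfold Rdiv. split.
  - apply Rmult_le_pos; [apply Rmult_le_pos; lra | left; apply Rinv_0_lt_compat; lra].
  - assert (g / M <= M ^ S k).
    { apply Rmult_le_reg_r with M; [lra|]. unfold Rdiv. rewrite Rmult_assoc, Rinv_l by lra. lra. }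
    assert (0 <= g / M) by (apply Rmult_le_pos; [lra | left; apply Rinv_0_lt_compat; lra]).
    unfold Rdiv in *. nra.
Qed.

Lemma part_i (m : nat) (q : nat -> R) (s : R) :
  2 <= INR m -> regular_law (INR m) q -> 0 <= s < INR m ->
  0 <= Thetaq m q s <= 1 + deltaq m q.
Proof.
  intros HM Hreg Hs. set (M := INR m) in *.
  pose proof Hreg as (Hq & Hsum & HA & HB).
  apply Series_correct in HA. apply Series_correct in HB.
  pose proof (Series_correct _ (regular_moment0 M q Hreg s ltac:(lra))) as H0.
  pose proof (Series_correct _ (regular_deriv1 M q ltac:(lra) Hreg s ltac:(lra))) as H1.
  pose proof (Series_correct _ (regular_deriv2 M q ltac:(lra) Hreg s Hs)) as H2.
  assert (HT : is_series (fun k => q k * theta_atom M s k) (Thetaq m q s)).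
  { unfold Thetaq, Hgf1, Hgf2, expect.
    rewrite (Hgf_moment q s _ H0), (Rsum_eq _ _ H1), (Rsum_eq _ _ H2),
      (deltaq_moment m q _ _ HA HB).
    fold M. set (c := (M - 1) * (M - s) / M).
    eapply is_series_congr; [| | exact (is_series_lin 1 1 _ _ _ _
      (is_series_lin 1 (- (s * (s - 1)) - c * 2 * s) _ _ _ _ H0 H1)
      (is_series_lin (- c * s ^ 2) 1 _ _ _ _ H2 (is_series_lin (M - 1) (-1) _ _ _ _ HB HA)))].
    - intro k. unfold theta_atom, moment_term. fold c. ring.
    - ring. }
  split.
  - refine (is_series_ge0 _ _ _ HT). intro k.
    exact (Rmult_le_pos _ _ (Hq k) (proj1 (theta_atom_bounds M s k HM ltac:(lra)))).
  - assert (E := is_series_lin 1 (-1) _ _ _ _ (is_series_lin 1 1 _ _ _ _ Hsum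
        (is_series_lin (M - 1) (-1) _ _ _ _ HB HA)) HT).
    rewrite (deltaq_moment m q _ _ HA HB). fold M.
    apply is_series_ge0 in E; [lra|].
    intro k. pose proof (proj2 (theta_atom_bounds M s k HM ltac:(lra))) as Hk.
    unfold moment_term. specialize (Hq k). simpl pow. nra.
Qed.

Definition theta_moments (M s h f1 f2 d : R) : R :=
  h - (s - 1) * f1 - (M - 1) * (M - s) / M * (f1 + f2) + d.

Lemma Thetaq_moments m q s (h f1 f2 : R) : 0 < s -> 0 < INR m ->
  is_series (moment_term 0 q s) h -> is_series (moment_term 1 q s) f1 ->
  is_series (moment_term 2 q s) f2 ->
  Thetaq m q s = theta_moments (INR m) s h f1 f2 (deltaq m q).
Proof.
  intros Hs HM H0 H1 H2. unfold Thetaq, theta_moments.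
  rewrite (Hgf_moment _ _ _ H0), (Hgf1_moment _ _ _ Hs H1), (Hgf2_moment _ _ _ _ Hs H1 H2).
  field. lra.
Qed.

Lemma phiq_moments m q s (h f1 : R) : 0 < s ->
  is_series (moment_term 0 q s) h -> is_series (moment_term 1 q s) f1 ->
  phiq m q s = (INR m - 1) * f1 - h.
Proof.
  intros Hs H0 H1. unfold phiq.
  rewrite (Hgf_moment _ _ _ H0), (Hgf1_moment _ _ _ Hs H1). field. lra.
Qed.

(* The exact one-step identity: with x = h^(m-2), Am1 = A^(m-1), P0 = P(S = 0) and
   the moments of the next law given by [step_law_moment0/1/2], one has
   s Theta' - M Theta h^(m-1) = d (s A^(m-1) - M h^(m-1)) - (M - s) h^(m-2) phi^2. *)
Lemma theta_step_identity (M s h f1 f2 d x Am1 P0 : R) : 0 < s -> M <> 0 ->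
  s * theta_moments M s
        ((h * (h * x) - P0 + s * P0) / s)
        ((M * (h * x) * f1 - h * (h * x) + P0) / s)
        ((M * (h * x) * f2 + M * (M - 1) * x * f1 ^ 2 - 2 * (M * (h * x) * f1)
          + h * (h * x) - P0) / s)
        (Am1 * d)
  - M * theta_moments M s h f1 f2 d * (h * x)
  = d * (s * Am1 - M * (h * x)) - (M - s) * x * ((M - 1) * f1 - h) ^ 2.
Proof. intros Hs HM. unfold theta_moments. field. lra. Qed.

Lemma theta_step_remainder (M s d phi x G K : R) :
  s < M -> 0 <= x -> 0 <= d -> phi <= d -> 1 <= K -> (M - s) * x * phi <= G ->
  d * G - (M - s) * x * phi ^ 2 >= - (K * (M - s) * x * (d - phi) ^ 2).
Proof.
  intros Hs Hx Hd Hphi HK HG.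
  assert (d * ((M - s) * x * phi) <= d * G) by (apply Rmult_le_compat_l; auto).
  assert (0 <= (M - s) * x * (d - phi) * (d + (K - 1) * (d - phi))).
  { apply Rmult_le_pos; [apply Rmult_le_pos; [apply Rmult_le_pos|]|]; try lra.
    assert (0 <= (K - 1) * (d - phi)) by (apply Rmult_le_pos; lra). lra. }
  nra.
Qed.

(* Lower bound for G = s A^(m-1) - M h^(m-1) (x = h^(m-2), Am1 = A^(m-1)), from the
   convexity of a |-> a^(m-1) and the moment gap (M - s) f1 <= s (A - h). *)
Lemma power_gap (M s h f1 A x Am1 : R) :
  1 <= M -> 0 < s -> 0 <= x ->
  (M - s) * f1 <= s * (A - h) -> (M - 1) * x * (A - h) <= Am1 - h * x ->
  (M - s) * x * ((M - 1) * f1 - h) <= s * Am1 - M * (h * x).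
Proof.
  intros HM Hs Hx Hgap Hconv.
  assert (s * ((M - 1) * x * (A - h)) <= s * (Am1 - h * x)) by (apply Rmult_le_compat_l; lra).
  assert ((M - 1) * x * ((M - s) * f1) <= (M - 1) * x * (s * (A - h)))
    by (apply Rmult_le_compat_l; auto; apply Rmult_le_pos; lra).
  nra.
Qed.

Section MomentComparison.
Variables (q : nat -> R) (s M h f1 A B : R).
Hypotheses (Hq : forall k, 0 <= q k) (Hs : 0 <= s <= M)
  (H0 : is_series (moment_term 0 q s) h) (H1 : is_series (moment_term 1 q s) f1)
  (HA : is_series (moment_term 0 q M) A) (HB : is_series (moment_term 1 q M) B).

Lemma moment0_le : h <= A.
Proof. exact (is_series_le _ _ _ _ (moment_term_mono 0 q s M Hq Hs) H0 HA). Qed.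

(* (M - s) E X s^X <= s (E M^X - E s^X), termwise the tangent bound. *)
Lemma moment_gap : (M - s) * f1 <= s * (A - h).
Proof.
  enough ((M - s) * f1 <= s * A + - s * h) by lra.
  eapply is_series_le;
    [| exact (is_series_scale _ _ _ H1) | exact (is_series_lin _ _ _ _ _ _ HA H0)].
  intro k.
  unfold moment_term. pose proof (tangent_bound_pred M s k Hs) as Bk.
  assert (E : INR k ^ 1 * s ^ k = s * (INR k * s ^ (k - 1))).
  { destruct k; cbn [Nat.sub pow]; rewrite ?Nat.sub_0_r, ?S_INR; simpl INR; ring. }
  rewrite E. specialize (Hq k).
  assert (0 <= q k * s) by (apply Rmult_le_pos; lra). nra.
Qed.

(* phi(s) <= delta: termwise ((M - 1) k - 1) s^k <= ((M - 1) k - 1) M^k. *)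
Lemma phi_le_delta : 2 <= M -> (M - 1) * f1 - h <= (M - 1) * B - A.
Proof.
  intros HM.
  enough ((M - 1) * f1 + -1 * h <= (M - 1) * B + -1 * A) by lra.
  eapply is_series_le;
    [| exact (is_series_lin _ _ _ _ _ _ H1 H0) | exact (is_series_lin _ _ _ _ _ _ HB HA)].
  intro k.
  unfold moment_term. specialize (Hq k).
  destruct k as [|k]; [simpl; lra|].
  assert (s ^ S k <= M ^ S k) by (apply pow_incr; lra).
  assert (0 <= (M - 1) * INR (S k) - 1).
  { rewrite S_INR. assert (0 <= INR k) by apply pos_INR. nra. }
  assert (0 <= q (S k) * ((M - 1) * INR (S k) - 1)) by (apply Rmult_le_pos; lra).
  assert (E : forall t,
    (M - 1) * (q (S k) * (INR (S k) ^ 1 * t)) + -1 * (q (S k) * (INR (S k) ^ 0 * t))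
    = q (S k) * ((M - 1) * INR (S k) - 1) * t) by (intro; ring).
  rewrite !E. now apply Rmult_le_compat_l.
Qed.
End MomentComparison.

(* The one-step estimate in terms of moments (m = k + 2 = M): the identity, the
   lower bound on G = s A^(m-1) - M h^(m-1), and phi <= delta. *)
Lemma theta_step_bound (k : nat) (M s h f1 f2 A d P0 K : R) :
  M - 1 = INR (S k) -> 0 < s < M -> 0 <= h <= A -> 0 <= d -> (M - 1) * f1 - h <= d -> 1 <= K ->
  (M - s) * f1 <= s * (A - h) ->
  theta_moments M s
    ((h ^ S (S k) - P0 + s * P0) / s)
    ((M * h ^ S k * f1 - h ^ S (S k) + P0) / s)
    ((M * h ^ S k * f2 + M * (M - 1) * h ^ k * f1 ^ 2 - 2 * (M * h ^ S k * f1)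
      + h ^ S (S k) - P0) / s)
    (A ^ S k * d)
  >= M / s * theta_moments M s h f1 f2 d * h ^ S k
     - K * (M - s) / s * (d - ((M - 1) * f1 - h)) ^ 2 * h ^ k.
Proof.
  intros HMk Hs Hh Hd Hphi HK Hgap.
  assert (HM : 1 <= M) by (pose proof (pos_INR (S k)); lra).
  assert (Hx : 0 <= h ^ k) by (apply pow_le; lra).
  (* convexity of a |-> a^(m-1) on [h, A] *)
  pose proof (tangent_bound A h k Hh) as Hconv. rewrite <- HMk in Hconv.
  pose proof (power_gap M s h f1 A (h ^ k) (A ^ S k) HM ltac:(lra) Hx Hgap Hconv) as HG.
  pose proof (theta_step_remainder M s d _ (h ^ k) _ K ltac:(lra) Hx Hd Hphi HK HG) as Hrem.
  pose proof (theta_step_identity M s h f1 f2 d (h ^ k) (A ^ S k) P0 ltac:(lra) ltac:(lra)) as Hid.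
  change (h * (h * h ^ k)) with (h ^ S (S k)) in Hid. change (h * h ^ k) with (h ^ S k) in *.
  set (phi := (M - 1) * f1 - h) in *.
  set (T1 := theta_moments M s _ _ _ (A ^ S k * d)) in *.
  set (T0 := theta_moments M s h f1 f2 d) in *.
  assert (E : T1 - (M / s * T0 * h ^ S k - K * (M - s) / s * (d - phi) ^ 2 * h ^ k)
              = / s * (s * T1 - M * T0 * h ^ S k + K * (M - s) * h ^ k * (d - phi) ^ 2))
    by (field; lra).
  assert (0 <= / s * (s * T1 - M * T0 * h ^ S k + K * (M - s) * h ^ k * (d - phi) ^ 2))
    by (apply Rmult_le_pos; [left; apply Rinv_0_lt_compat |]; lra).
  lra.
Qed.

Lemma part_ii (m : nat) (q : nat -> R) (s K : R) :
  (2 <= m)%nat -> regular_law (INR m) q -> 0 <= deltaq m q -> 0 < s < INR m -> 1 <= K ->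
  Thetaq m (step m q) s >=
    INR m / s * Thetaq m q s * Hgf q s ^ (m - 1)
    - K * (INR m - s) / s * (deltaq m q - phiq m q s) ^ 2 * Hgf q s ^ (m - 2).
Proof.
  intros Hm2 Hreg Hd Hs HK.
  assert (HM : 2 <= INR m) by (replace 2 with (INR 2) by (simpl; ring); apply le_INR; auto).
  assert (HM0 : 0 < INR m) by lra. assert (HM1 : 1 <= INR m) by lra.
  pose proof Hreg as (Hq & _ & HA & HB). apply Series_correct in HA. apply Series_correct in HB.
  pose proof (Series_correct _ (regular_moment0 _ q Hreg s ltac:(lra))) as H0.
  pose proof (Series_correct _ (regular_moment1 _ q Hreg s ltac:(lra))) as H1.
  pose proof (Series_correct _ (regular_moment2 _ q Hreg s ltac:(lra))) as H2.
  set (h := Series (moment_term 0 q s)) in *. set (f1 := Series (moment_term 1 q s)) in *.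
  set (f2 := Series (moment_term 2 q s)) in *.
  set (A := Series (moment_term 0 q (INR m))) in *.
  set (B := Series (moment_term 1 q (INR m))) in *.
  assert (Hh : 0 <= h) by exact (is_series_ge0 _ _ (moment_term_ge0 0 q s Hq ltac:(lra)) H0).
  rewrite (Thetaq_moments m _ s _ _ _ ltac:(lra) HM0
             (step_law_moment0 m q s h f1 Hq ltac:(lra) H0 H1)
             (step_law_moment1 m q s h f1 Hq ltac:(lra) H0 H1)
             (step_law_moment2 m q s h f1 Hq ltac:(lra) H0 H1 f2 H2)),
    (Thetaq_moments m q s h f1 f2 ltac:(lra) HM0 H0 H1 H2),
    (step_delta m q HM1 Hreg A B HA HB), (phiq_moments m q s h f1 ltac:(lra) H0 H1),
    (Hgf_moment q s h H0).
  rewrite (deltaq_moment m q A B HA HB) in Hd |- *.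
  destruct m as [|[|k]]; [lia | lia |].
  replace (S (S k) - 1)%nat with (S k) by lia. replace (S (S k) - 2)%nat with k by lia.
  apply theta_step_bound; auto.
  - rewrite (S_INR (S k)). ring.
  - split; [exact Hh | exact (moment0_le q s (INR (S (S k))) h A Hq ltac:(lra) H0 HA)].
  - exact (phi_le_delta q s (INR (S (S k))) h f1 A B Hq ltac:(lra) H0 H1 HA HB HM).
  - exact (moment_gap q s (INR (S (S k))) h f1 A Hq ltac:(lra) H0 H1 HA).
Qed.

Lemma X0law_moment p r j s (R0 : R) : is_series (moment_term j r s) R0 ->
  is_series (moment_term j (X0law p r) s) ((1 - p) * INR 0 ^ j + p * R0).
Proof.
  intros H.
  eapply is_series_congr;
    [| reflexivity | exact (is_series_lin _ _ _ _ _ _ (delta0_moment j s) H)].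
  intro k. unfold moment_term, X0law. ring.
Qed.

Section InitialLaw.
Variables (m : nat) (r : nat -> R) (l : R).
Let M := INR m.
Hypotheses (HM : 2 <= M) (Hr : forall k, 0 <= r k) (Hr0 : r 0%nat = 0) (Hrs : is_series r 1)
  (Hl : is_series (moment_term 1 r M) l).

(* Since X* >= 1, E m^X* <= E X* m^X*. *)
Lemma initial_moment0 : ex_series (moment_term 0 r M).
Proof.
  apply (ex_series_dominated _ (moment_term 1 r M)); [| eexists; exact Hl].
  intro k. split; [apply moment_term_ge0; auto; lra|]. unfold moment_term.
  destruct k as [|k]; [rewrite Hr0; lra|].
  apply Rmult_le_compat_l; auto. apply Rmult_le_compat_r; [apply pow_le; lra|].
  rewrite pow_O, pow_1, S_INR. pose proof (pos_INR k). lra.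
Qed.

Lemma initial_excess :
  let E := (M - 1) * l - Series (moment_term 0 r M) in 0 <= E /\ pc m r = 1 / (1 + E).
Proof.
  intros E. pose proof (Series_correct _ initial_moment0) as HA.
  assert (HE : is_series (fun k => r k * (((M - 1) * INR k - 1) * M ^ k)) E).
  { eapply is_series_congr; [| | exact (is_series_lin (M - 1) (-1) _ _ _ _ Hl HA)].
    - intro k; unfold moment_term; ring.
    - unfold E; ring. }
  split.
  - refine (is_series_ge0 _ _ _ HE). intro k. destruct k as [|k]; [rewrite Hr0; lra|].
    apply Rmult_le_pos; auto. apply Rmult_le_pos; [| apply pow_le; lra].
    rewrite S_INR. pose proof (pos_INR k). nra.
  - unfold pc, expect. fold M. now rewrite (Rsum_eq _ _ HE).
Qed.

Lemma initial_law_regular p : 0 <= p <= 1 -> regular_law M (X0law p r).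
Proof.
  intros Hp. split; [|split; [|split]].
  - intro k. unfold X0law. apply Rplus_le_le_0_compat; apply Rmult_le_pos; auto; try lra.
    destruct k; simpl; lra.
  - eapply is_series_congr; [| | exact (X0law_moment p r 0 1 1 ltac:(eapply is_series_congr;
      [| reflexivity | exact Hrs]; intro; unfold moment_term; rewrite pow1; ring))].
    + intro; unfold moment_term; rewrite pow1; ring.
    + simpl; ring.
  - eexists. exact (X0law_moment p r 0 M _ (Series_correct _ initial_moment0)).
  - eexists. exact (X0law_moment p r 1 M _ Hl).
Qed.

(* delta_0 = p (1 + excess) - 1, which is positive exactly when p > p_c. *)
Lemma initial_delta p :
  deltaq m (X0law p r) = p * (1 + ((M - 1) * l - Series (moment_term 0 r M))) - 1.
Proof.
  rewrite (deltaq_moment m _ _ _ (X0law_moment p r 0 M _ (Series_correct _ initial_moment0))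
                                 (X0law_moment p r 1 M _ Hl)).
  fold M. simpl. ring.
Qed.
End InitialLaw.

(** Main theorem (Lemma 3.3). *)
Theorem lemma3p3 (m : nat) (r : nat -> R) (p : R) :
  (2 <= m)%nat ->
  (forall k, 0 <= r k) -> r 0%nat = 0 -> infinite_sum r 1 ->
  (exists k, (2 <= k)%nat /\ 0 < r k) ->
  (exists l, infinite_sum (fun k => r k * (INR k * INR m ^ k)) l) ->
  pc m r < p -> p <= 1 ->
  forall n : nat,
    (forall s, 0 <= s < INR m ->
       0 <= Thetaq m (law m (X0law p r) n) s <= 1 + deltaq m (law m (X0law p r) n))
    /\
    (deltaq m (law m (X0law p r) n) <= 1 ->
     forall s, INR m / 2 <= s < INR m ->
       Thetaq m (law m (X0law p r) (S n)) s >=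
         INR m / s * Thetaq m (law m (X0law p r) n) s
           * Hgf (law m (X0law p r) n) s ^ (m - 1)
         - (3 ^ (m - 2) + 1) * (INR m - s) / s
           * (deltaq m (law m (X0law p r) n) - phiq m (law m (X0law p r) n) s) ^ 2
           * Hgf (law m (X0law p r) n) s ^ (m - 2)).
Proof.
  intros Hm2 Hr Hr0 Hrs _ [l Hl] Hpc Hp1 n.
  assert (HM : 2 <= INR m) by (replace 2 with (INR 2) by (simpl; ring); apply le_INR; auto).
  apply is_series_Reals in Hrs. apply is_series_Reals in Hl.
  assert (Hl1 : is_series (moment_term 1 r (INR m)) l)
    by (eapply is_series_congr; [| reflexivity | exact Hl]; intro; unfold moment_term; ring).
  clear Hl.
  (* p > p_c >= 0 makes X_0 a regular law with delta_0 > 0. *)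
  destruct (initial_excess m r l HM Hr Hr0 Hl1) as [HE Hpc_eq].
  set (E := (INR m - 1) * l - Series (moment_term 0 r (INR m))) in *.
  rewrite Hpc_eq in Hpc.
  assert (Hp : 1 < p * (1 + E)).
  { apply Rmult_lt_compat_r with (r := 1 + E) in Hpc; [| lra].
    unfold Rdiv in Hpc. rewrite Rmult_1_l, Rinv_l in Hpc by lra. exact Hpc. }
  assert (Hp0 : 0 <= p) by nra.
  destruct (law_regular m (X0law p r) ltac:(lra)
              (initial_law_regular m r l HM Hr Hr0 Hrs Hl1 p ltac:(lra))
              ltac:(rewrite (initial_delta m r l HM Hr Hr0 Hl1 p); fold E; lra) n) as [Hreg Hd].
  split.
  - intros s Hs. now apply part_i.
  - intros _ s Hs. apply part_ii; auto; try lra.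
    pose proof (pow_le 3 (m - 2) ltac:(lra)). lra.
Qed.
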